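(* The sequence $(\Gamma(n,n+1))_{n\ge1}$ is $1,2,1,2,1,2,\ldots$, i.e., $\Gamma(n,n+1)=1$ for odd $n$ and $\Gamma(n,n+1)=2$ for even $n$.
   Context: For relatively prime positive integers $p,q$, exactly one of the equations $px+qy=\frac{(p-1)(q-1)}{2}$ (Equation 1) and $px+qy+1=\frac{(p-1)(q-1)}{2}$ (Equation 2) has a solution in nonnegative integers $(x,y)$. For positive integers $a,b$ with $d=\gcd(a,b)$, $\Gamma(a,b)=1$ if Equation 1 with $(p,q)=(a/d,b/d)$ has a nonnegative integer solution, and $\Gamma(a,b)=2$ otherwise. *)

From mathcomp Require Import all_boot.
From mathcomp Require Import boolp.
Set Implicit Arguments. Unset Strict Implicit. Unset Printing Implicit Defensive.

Definition eq1_solvable (p q : nat) : Prop :=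
  exists x y : nat, p * x + q * y = ((p - 1) * (q - 1)) %/ 2.

Definition Gamma (a b : nat) : nat :=
  let d := gcdn a b in
  if `[< eq1_solvable (a %/ d) (b %/ d) >] then 1 else 2.

(* For p = n and q = n + 1 (always coprime) the right-hand side (p-1)(q-1)/2
   is n(n-1)/2.  When n is odd it is the multiple n * (n-1)/2 of n.  When
   n = 2k it equals 2k^2 - k, so any solution 2k x + (2k+1) y = 2k^2 - k
   forces 2k to divide y + k, hence y >= k and (2k+1) y >= (2k+1) k > 2k^2 - k. *)

From mathcomp Require Import all_boot.
From mathcomp Require Import boolp.
From mathcomp Require Import zify.

Lemma Gamma_coprime_solvable (p q : nat) :
  coprime p q -> eq1_solvable p q -> Gamma p q = 1.
Proof. by rewrite /Gamma => /eqP -> sol; rewrite !divn1 asboolT. Qed.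

Lemma Gamma_coprime_unsolvable (p q : nat) :
  coprime p q -> ~ eq1_solvable p q -> Gamma p q = 2.
Proof. by rewrite /Gamma => /eqP -> nsol; rewrite !divn1 asboolF. Qed.

Lemma eq1_solvable_odd_succ (n : nat) : odd n -> eq1_solvable n n.+1.
Proof.
move=> n_odd; exists n./2, 0.
have n_eq : n = (n./2).*2.+1 by rewrite -[LHS]odd_double_half n_odd.
have -> : (n - 1) * (n.+1 - 1) = n * n./2 * 2 by nia.
by rewrite mulnK // muln0 addn0.
Qed.

Lemma eq1_unsolvable_even_succ (k : nat) :
  0 < k -> ~ eq1_solvable k.*2 k.*2.+1.
Proof.
move=> k_gt0 [x [y sol]].
have target : (k.*2 - 1) * (k.*2.+1 - 1) %/ 2 = k * k.*2 - k.
  have -> : (k.*2 - 1) * (k.*2.+1 - 1) = (k * k.*2 - k) * 2 by nia.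
  by rewrite mulnK.
rewrite target in sol.
have y_k_mod : k.*2 %| y + k.
  have sum : k.*2 * (x + y) + (y + k) = k.*2 * k by nia.
  by rewrite -(dvdn_addr _ (dvdn_mulr (x + y) (dvdnn k.*2))) sum dvdn_mulr.
have y_ge_k : k <= y.
  by have := dvdn_leq (ltn_addl _ k_gt0) y_k_mod; lia.
have y_term_le : k.*2.+1 * y <= k * k.*2 - k by rewrite -sol leq_addl.
have target_lt : k * k.*2 - k < k.*2.+1 * k by move: k_gt0; clear; nia.
have := leq_ltn_trans y_term_le target_lt.
by rewrite ltn_mul2l /= ltnNge y_ge_k.
Qed.

Theorem lemma4p2 (n : nat) : 1 <= n ->
  Gamma n n.+1 = (if odd n then 1 else 2).
Proof.
move=> n_gt0; have cop : coprime n n.+1 by rewrite coprimenS.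
case: ifP => [n_odd | n_even].
  exact/Gamma_coprime_solvable/eq1_solvable_odd_succ.
apply: Gamma_coprime_unsolvable => //.
have n_eq : n = (n./2).*2 by rewrite -[LHS]odd_double_half n_even.
rewrite n_eq; apply: eq1_unsolvable_even_succ; lia.
Qed.
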